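(* For every positive integer $k$, every $1<p\le 2$ and every $0<\eta\le 1$ there exists a positive integer $\mathrm{U}(k,p,\eta)$ such that the following holds. If $(\Omega,\mathcal{F},\mathbb{P})$ is a probability space, $\mathcal{S}$ is a $k$-semiring on $\Omega$ with $\mathcal{S}\subseteq\mathcal{F}$ and $f\in L_p(\Omega,\mathcal{F},\mathbb{P})$ with $\|f\|_{L_p}\le 1$, then there exist a positive integer $M\le\mathrm{U}(k,p,\eta)$ and a partition $\mathcal{P}$ of $\Omega$ with $\mathcal{P}\subseteq\mathcal{S}$ and $|\mathcal{P}|=M$ such that $\sum_{S\in\mathrm{Unf}(\mathcal{P},f,\eta)}\mathbb{P}(S)\ge 1-\eta$.
   Context: A collection $\mathcal{S}$ of subsets of a nonempty set $\Omega$ is a $k$-semiring if: $\emptyset,\Omega\in\mathcal{S}$; $S\cap T\in\mathcal{S}$ for $S,T\in\mathcal{S}$; for $S,T\in\mathcal{S}$ there exist $\ell\in\{1,\dots,k\}$ and pairwise disjoint $R_1,\dots,R_\ell\in\mathcal{S}$ with $S\setminus T=R_1\cup\dots\cup R_\ell$. For an event $S$ with $\mathbb{P}(S)>0$ let $\mathbb{E}(f\mid S)=(\int_S f\,d\mathbb{P})/\mathbb{P}(S)$, and $\mathbb{E}(f\mid S)=0$ if $\mathbb{P}(S)=0$. A set $S\in\mathcal{S}$ is $(f,\mathcal{S},\eta)$-uniform if for every $T\subseteq S$ with $T\in\mathcal{S}$ we have $|\int_T (f-\mathbb{E}(f\mid S))\,d\mathbb{P}|\le\eta\,\mathbb{P}(S)$.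 For $\mathcal{C}\subseteq\mathcal{S}$, $\mathrm{Unf}(\mathcal{C},f,\eta)$ is the set of $C\in\mathcal{C}$ that are $(f,\mathcal{S},\eta)$-uniform. $\mathcal{P}\subseteq\mathcal{S}$ means every member of the partition lies in $\mathcal{S}$. *)

From HB Require Import structures.
From mathcomp Require Import all_boot all_order all_algebra.
From mathcomp Require Import all_classical all_reals all_analysis.
Set Implicit Arguments. Unset Strict Implicit. Unset Printing Implicit Defensive.
Import Order.TTheory GRing.Theory Num.Theory.
Local Open Scope classical_set_scope.
Local Open Scope ring_scope.

Definition k_semiring (Omega : Type) (k : nat) (Sf : set (set Omega)) : Prop :=
  [/\ Sf set0, Sf setT,
      (forall S T, Sf S -> Sf T -> Sf (S `&` T)) &
      (forall S T, Sf S -> Sf T ->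
         exists l : nat, exists Rs : 'I_l -> set Omega,
           [/\ (1 <= l <= k)%N,
               (forall i, Sf (Rs i)),
               (forall i j, i != j -> Rs i `&` Rs j = set0) &
               S `\` T = \bigcup_(i in [set: 'I_l]) Rs i])].

Definition cond_exp d (Omega : measurableType d) (R : realType)
  (P : probability Omega R) (f : Omega -> R) (S : set Omega) : R :=
  if (0 < fine (P S)) then (\int[P]_(x in S) f x) / fine (P S) else 0.

Definition uniform_set d (Omega : measurableType d) (R : realType)
  (P : probability Omega R) (Sf : set (set Omega)) (f : Omega -> R)
  (eta : R) (S : set Omega) : Prop :=
  Sf S /\
  forall T, Sf T -> T `<=` S ->
    `| \int[P]_(x in T) (f x - cond_exp P f S) | <= eta * fine (P S).

Definition is_partition (Omega : Type) (M : nat) (Pt : 'I_M -> set Omega) : Prop :=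
  [/\ (forall i, Pt i !=set0),
      (forall i j, i != j -> Pt i `&` Pt j = set0) &
      \bigcup_(i in [set: 'I_M]) Pt i = setT].

From HB Require Import structures.
From mathcomp Require Import all_boot all_order all_algebra.
From mathcomp Require Import all_classical all_reals all_analysis.
From mathcomp Require Import ring lra measurable_realfun.
Set Implicit Arguments. Unset Strict Implicit. Unset Printing Implicit Defensive.
Import Order.TTheory GRing.Theory Num.Theory.
Local Open Scope classical_set_scope.
Local Open Scope ring_scope.

(* Write f = g + h with g the truncation of f at height L and h the tail, so that
   |g| <= L and, by Chebyshev, E|h| <= L^(1-p).  For the bounded part run the energy
   increment argument: the energy sum_A (int_A g)^2 / P(A) of a partition is at most
   L^2, and splitting every cell on which g is not (eta/2)-uniform along a witness set
   B and the at most k pieces of A \ B raises it by (eta/2)^2 P(A) per such cell.  After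
   N ~ L^2 / eta^3 rounds, of at most (k+1)-fold refinement each, the cells on which g
   fails to be (eta/2)-uniform have total mass <= eta/2.  A cell where g is uniform and
   h carries at most an eta/4 fraction of its mass is eta-uniform for f, and by
   Markov's inequality the cells where h is heavier have total mass <= eta/2. *)

Section SquareRatio.
Variable R : realFieldType.

Definition sqdiv (a m : R) : R := if 0 < m then a ^+ 2 / m else 0.

Lemma sqdiv_ge0 a m : 0 <= sqdiv a m.
Proof. by rewrite /sqdiv; case: ifP => // /ltW m0; rewrite divr_ge0 ?sqr_ge0. Qed.

Lemma sqdivr0 a : sqdiv a 0 = 0.
Proof. by rewrite /sqdiv ltxx. Qed.

Lemma sqdivD_le a1 a2 m1 m2 : 0 <= m1 -> 0 <= m2 ->
    (m1 = 0 -> a1 = 0) -> (m2 = 0 -> a2 = 0) ->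
  sqdiv (a1 + a2) (m1 + m2) <= sqdiv a1 m1 + sqdiv a2 m2.
Proof.
move=> + m2_ge0 e1 e2; rewrite le0r => /predU1P[m10|m1_gt0].
  by rewrite m10 (e1 m10) !add0r sqdivr0 add0r.
move: m2_ge0; rewrite le0r => /predU1P[m20|m2_gt0].
  by rewrite m20 (e2 m20) !addr0 sqdivr0 addr0.
have m_gt0 : 0 < m1 + m2 by rewrite addr_gt0.
rewrite /sqdiv m1_gt0 m2_gt0 m_gt0 -subr_ge0.
have -> : a1 ^+ 2 / m1 + a2 ^+ 2 / m2 - (a1 + a2) ^+ 2 / (m1 + m2) =
    (a1 * m2 - a2 * m1) ^+ 2 / (m1 * m2 * (m1 + m2)).
  by field; rewrite !gt_eqF.
by rewrite divr_ge0 ?sqr_ge0 // !mulr_ge0 ?ltW.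
Qed.

Lemma sqdivD_gap a1 a2 m1 m2 delta : 0 < delta -> 0 <= m1 -> 0 <= m2 ->
    (m1 = 0 -> a1 = 0) -> (m2 = 0 -> a2 = 0) ->
    delta * (m1 + m2) <
      `|a1 - (if 0 < m1 + m2 then (a1 + a2) / (m1 + m2) else 0) * m1| ->
  sqdiv (a1 + a2) (m1 + m2) + delta ^+ 2 * (m1 + m2) <= sqdiv a1 m1 + sqdiv a2 m2.
Proof.
move=> delta_gt0 + m2_ge0 e1 e2; rewrite le0r => /predU1P[m10|m1_gt0].
  rewrite m10 (e1 m10) mulr0 subr0 normr0 add0r => gap.
  by have := mulr_ge0 (ltW delta_gt0) m2_ge0; rewrite leNgt gap.
move: m2_ge0; rewrite le0r => /predU1P[m20|m2_gt0].
  rewrite m20 (e2 m20) !addr0 m1_gt0 divfK ?gt_eqF // subrr normr0 => gap.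
  by have := mulr_ge0 (ltW delta_gt0) (ltW m1_gt0); rewrite leNgt gap.
set m := m1 + m2; have m_gt0 : 0 < m by rewrite addr_gt0.
rewrite m_gt0; set D := a1 * m2 - a2 * m1.
have -> : a1 - (a1 + a2) / m * m1 = D / m by rewrite /D /m; field; rewrite gt_eqF.
have inv_m_gt0 : 0 < m^-1 by rewrite invr_gt0.
rewrite normrM (gtr0_norm inv_m_gt0) ltr_pdivlMr // => gap.
rewrite /sqdiv m1_gt0 m2_gt0 m_gt0 -subr_ge0.
have -> : a1 ^+ 2 / m1 + a2 ^+ 2 / m2 - ((a1 + a2) ^+ 2 / m + delta ^+ 2 * m) =
    (D ^+ 2 - delta ^+ 2 * m ^+ 2 * (m1 * m2)) / (m1 * m2 * m).
  by rewrite /D /m; field; rewrite ?gt_eqF.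
apply: divr_ge0; last by rewrite !mulr_ge0 ?ltW.
rewrite subr_ge0.
have gap2 : (delta * m * m) ^+ 2 <= D ^+ 2.
  have : 0 <= delta * m * m by rewrite !mulr_ge0 ?ltW.
  rewrite -(real_normK (num_real D)); nra.
have m1m2 : m1 * m2 <= m ^+ 2 by rewrite /m; nra.
apply: le_trans gap2; rewrite [leRHS](_ : _ = delta ^+ 2 * m ^+ 2 * m ^+ 2); last by ring.
by rewrite ler_wpM2l // mulr_ge0 ?sqr_ge0.
Qed.

End SquareRatio.

Section SeqOfSets.
Variable T : Type.
Implicit Types (s : seq (set T)) (A B : set T) (Q : set T -> Prop).

Fixpoint every Q s : Prop := if s is A :: s' then Q A /\ every Q s' else True.

Definition seq_cover s : set T := foldr setU set0 s.

Fixpoint seq_disjoint s : Prop :=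
  if s is A :: s' then A `&` seq_cover s' = set0 /\ seq_disjoint s' else True.

Definition drop_empty s := [seq A <- s | `[< A !=set0 >]].

Lemma every_cat Q s1 s2 : every Q (s1 ++ s2) <-> every Q s1 /\ every Q s2.
Proof. by elim: s1 => [|A s1 IH] /=; [tauto | rewrite IH; tauto]. Qed.

Lemma sub_every Q Q' s : Q `<=` Q' -> every Q s -> every Q' s.
Proof. by move=> QQ'; elim: s => //= A s IH [/QQ' ? /IH]. Qed.

Lemma every_map (I : Type) Q (F : I -> set T) (r : seq I) :
  (forall i, Q (F i)) -> every Q (map F r).
Proof. by move=> QF; elim: r => //= i r ->. Qed.

Lemma every_nth Q s i : every Q s -> (i < size s)%N -> Q (nth set0 s i).
Proof. by elim: s i => [|A s IH] [|i] //= [QA Qs] //; rewrite ltnS; apply: IH. Qed.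

Lemma seq_cover_cat s1 s2 : seq_cover (s1 ++ s2) = seq_cover s1 `|` seq_cover s2.
Proof. by elim: s1 => [|A s1 IH] /=; rewrite ?set0U // IH setUA. Qed.

Lemma seq_cover_mapP (I : eqType) (F : I -> set T) (r : seq I) x :
  seq_cover (map F r) x <-> exists2 i, i \in r & F i x.
Proof.
elim: r => [|i r IH] /=; first by split=> // -[].
split=> [[Fix|/IH[j jr Fjx]]|[j]]; first by exists i; rewrite ?mem_head.
  by exists j; rewrite // inE jr orbT.
by rewrite inE => /predU1P[-> Fix|jr Fjx]; [left | right; apply/IH; exists j].
Qed.

Lemma nth_sub_seq_cover s i : nth set0 s i `<=` seq_cover s.
Proof. by elim: s i => [|A s IH] [|i] x //= ?; [left | right; exact: (IH i)]. Qed.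

Lemma seq_coverP s x : seq_cover s x -> exists2 i, (i < size s)%N & nth set0 s i x.
Proof. by elim: s => [|A s IH] //= [Ax|/IH [i ? ?]]; [exists 0%N | exists i.+1]. Qed.

Lemma seq_disjoint_cat s1 s2 : seq_disjoint s1 -> seq_disjoint s2 ->
  seq_cover s1 `&` seq_cover s2 = set0 -> seq_disjoint (s1 ++ s2).
Proof.
elim: s1 => [|A s1 IH] //= [dA ds1] ds2 /disjoints_subset d12; split; last first.
  by apply: IH => //; apply/disjoints_subset => x ?; apply: d12; right.
apply/disjoints_subset => x Ax; rewrite seq_cover_cat => -[|].
  by apply/(disjoints_subset _ _).1: Ax.
by apply: d12; left.
Qed.

Lemma seq_disjoint_map (I : eqType) (F : I -> set T) (r : seq I) : uniq r ->
  (forall i j, i != j -> F i `&` F j = set0) -> seq_disjoint (map F r).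
Proof.
move=> + dF; elim: r => //= i r IH /andP[ir ur]; split; last exact: IH.
apply/disjoints_subset => x Fix /seq_cover_mapP[j jr Fjx].
have ij : i != j by apply: contraNneq ir => ->.
by apply: (disjoints_subset _ _).1 (dF _ _ ij) x Fix Fjx.
Qed.

Lemma seq_disjoint_nth s i j : seq_disjoint s -> i != j ->
  nth set0 s i `&` nth set0 s j = set0.
Proof.
elim: s i j => [|A s IH] i j /=; first by rewrite !nth_nil setI0.
move=> [/disjoints_subset dA ds]; case: i => [|i]; case: j => [|j] //= ij.
- by apply/disjoints_subset => x /dA; apply: contra_not; apply: nth_sub_seq_cover.
- by rewrite setIC; apply/disjoints_subset => x /dA; apply: contra_not; apply: nth_sub_seq_cover.
- exact: IH.
Qed.

Lemma seq_cover_drop_empty s : seq_cover (drop_empty s) = seq_cover s.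
Proof.
elim: s => //= A s IH; case: asboolP => /= [_|/nonemptyPn ->]; by rewrite IH ?set0U.
Qed.

Lemma seq_disjoint_drop_empty s : seq_disjoint s -> seq_disjoint (drop_empty s).
Proof.
elim: s => //= A s IH [dA ds]; case: ifP => _ /=; last exact: IH.
by rewrite seq_cover_drop_empty; split => //; exact: IH.
Qed.

Lemma every_drop_empty Q s : every Q s -> every Q (drop_empty s).
Proof. by elim: s => //= A s IH [QA Qs]; case: ifP => _ /=; [split | ]; auto. Qed.

Lemma every_nonempty_drop_empty s : every (fun A => A !=set0) (drop_empty s).
Proof. by elim: s => //= A s IH; case: ifP => // /asboolP. Qed.

Lemma ler_sum_every (R : numDomainType) Q s (F G : set T -> R) :
  every Q s -> (forall A, Q A -> F A <= G A) -> \sum_(A <- s) F A <= \sum_(A <- s) G A.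
Proof.
move=> + FG; elim: s => [|A s IH] /=; first by rewrite !big_nil.
by move=> [QA Qs]; rewrite !big_cons lerD ?FG ?IH.
Qed.

End SeqOfSets.

Section EnergyIncrement.
Variables (R : realFieldType) (T : Type).
Variable M : set (set T).
Hypotheses (M0 : M set0) (MU : forall A B, M A -> M B -> M (A `|` B))
  (MD : forall A B, M A -> M B -> M (A `\` B)).
Variables (k : nat) (Sf : set (set T)).
Hypotheses (Sf_semiring : k_semiring k Sf) (Sf_M : Sf `<=` M).

Definition disjoint_additive (phi : set T -> R) := forall A B, M A -> M B ->
  A `&` B = set0 -> phi (A `|` B) = phi A + phi B.

Variables (mu nu : set T -> R) (L delta : R).
Hypotheses (mu_additive : disjoint_additive mu) (nu_additive : disjoint_additive nu).
Hypotheses (mu_ge0 : forall A, M A -> 0 <= mu A) (muT : mu setT = 1).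
Hypotheses (nu_le : forall A, M A -> `|nu A| <= L * mu A) (delta_gt0 : 0 < delta).
Implicit Types (A B X : set T) (s : seq (set T)).

Lemma additive_set0 phi : disjoint_additive phi -> phi set0 = 0.
Proof. by move=> phiU; apply: (addrI (phi set0)); rewrite addr0 -phiU ?setU0 ?setI0. Qed.

Lemma M_seq_cover s : every M s -> M (seq_cover s).
Proof. by elim: s => //= A s IH [MA /IH]; apply: MU. Qed.

Lemma additive_seq_cover phi s : disjoint_additive phi -> every M s -> seq_disjoint s ->
  phi (seq_cover s) = \sum_(A <- s) phi A.
Proof.
move=> phiU; elim: s => [|A s IH] /=; first by rewrite big_nil additive_set0.
by move=> [MA Ms] [dA ds]; rewrite big_cons phiU ?IH //; apply: M_seq_cover.
Qed.

Lemma additive_le phi A B : disjoint_additive phi -> (forall X, M X -> 0 <= phi X) ->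
  M A -> M B -> B `<=` A -> phi B <= phi A.
Proof.
move=> phiU phi_ge0 MA MB BA; have MAB := MD MA MB.
by rewrite -(setDUK BA) phiU ?setDIK // lerDl phi_ge0.
Qed.

Lemma nu_null A : M A -> mu A = 0 -> nu A = 0.
Proof. by move=> MA mu0; apply/eqP; rewrite -normr_le0 -(mulr0 L) -mu0 nu_le. Qed.

Definition cell_energy A := sqdiv (nu A) (mu A).
Definition energy s := \sum_(A <- s) cell_energy A.
Definition average A := if 0 < mu A then nu A / mu A else 0.
Definition balanced A :=
  forall B, Sf B -> B `<=` A -> `|nu B - average A * mu B| <= delta * mu A.
Definition unbalanced_mass s := \sum_(A <- s | ~~ `[< balanced A >]) mu A.
Definition Sf_partition X s :=
  [/\ every Sf s, every (fun A => A !=set0) s, seq_disjoint s & seq_cover s = X].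

Lemma energy_ge0 s : 0 <= energy s.
Proof. by rewrite sumr_ge0 // => A _; apply: sqdiv_ge0. Qed.

Lemma cell_energy_le A : M A -> cell_energy A <= L ^+ 2 * mu A.
Proof.
move=> MA; rewrite /cell_energy /sqdiv; case: ifP => [mu_gt0|_]; last first.
  by rewrite mulr_ge0 ?sqr_ge0 ?mu_ge0.
have := nu_le MA; have := normr_ge0 (nu A).
rewrite ler_pdivrMr // -(real_normK (num_real (nu A))); nra.
Qed.

Lemma energy_le s : every M s -> seq_disjoint s -> energy s <= L ^+ 2 * mu (seq_cover s).
Proof.
move=> Ms ds; rewrite additive_seq_cover // mulr_sumr /energy.
elim: s Ms {ds} => [|A s IH] /=; first by rewrite !big_nil.
by move=> [MA Ms]; rewrite !big_cons; apply: lerD; [apply: cell_energy_le | apply: IH].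
Qed.

Lemma cell_energy_seq_cover_le s : every M s -> seq_disjoint s ->
  cell_energy (seq_cover s) <= energy s.
Proof.
elim: s => [|A s IH] /=.
  by rewrite /energy big_nil /cell_energy (additive_set0 mu_additive) sqdivr0.
move=> [MA Ms] [dA ds]; have Mcov := M_seq_cover Ms.
rewrite /energy big_cons /cell_energy mu_additive ?nu_additive //.
apply: le_trans (sqdivD_le (mu_ge0 MA) (mu_ge0 Mcov) (nu_null MA) (nu_null Mcov)) _.
by rewrite lerD2l; apply: IH.
Qed.

Lemma energy_drop_empty s : energy (drop_empty s) = energy s.
Proof.
rewrite /energy big_filter big_mkcond; apply: eq_bigr => A _.
case: asboolP => // /nonemptyPn ->.
by rewrite /cell_energy (additive_set0 mu_additive) sqdivr0.
Qed.

Lemma unbalanced_witness A : ~ balanced A -> exists B, [/\ Sf B, B `<=` A &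
  delta * mu A < `|nu B - average A * mu B|].
Proof.
move=> /existsNP[B /not_implyP[SB /not_implyP[BA /negP]]].
by rewrite -ltNge; exists B.
Qed.

Lemma split_cell A : Sf A -> A !=set0 -> exists p, [/\ Sf_partition A p,
  (size p <= k.+1)%N &
  cell_energy A + (if `[< balanced A >] then 0 else delta ^+ 2 * mu A) <= energy p].
Proof.
move=> SA A0; have MA := Sf_M SA; case: asboolP => [_|/unbalanced_witness[B [SB BA gap]]].
  exists [:: A]; split => //; last by rewrite /energy big_seq1 addr0.
  by split => //=; rewrite ?setI0 ?setU0.
have MB := Sf_M SB; have MAB := MD MA MB.
case: Sf_semiring => _ _ _ /(_ _ _ SA SB)[l [Rs [/andP[_ lk] SR dR ABR]]].
pose rs := map Rs (enum 'I_l).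
have Mrs : every M rs by apply: every_map => i; apply/Sf_M/SR.
have drs : seq_disjoint rs by apply: seq_disjoint_map; rewrite ?enum_uniq.
have cover_rs : seq_cover rs = A `\` B.
  rewrite ABR; apply/seteqP; split => x; first by case/seq_cover_mapP => i _; exists i.
  by case=> i _ Rix; apply/seq_cover_mapP; exists i; rewrite ?mem_enum.
have muA : mu A = mu B + mu (A `\` B) by rewrite -mu_additive ?setDIK ?setDUK.
have nuA : nu A = nu B + nu (A `\` B) by rewrite -nu_additive ?setDIK ?setDUK.
exists (B :: drop_empty rs); split.
- split => /=; rewrite ?seq_cover_drop_empty ?cover_rs ?setDIK ?setDUK //.
  + by split; [| apply/every_drop_empty/every_map].
  + split; last exact: every_nonempty_drop_empty.
    apply/set0P/negP => /eqP B0; move: gap; rewrite B0 (additive_set0 mu_additive).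
    rewrite (additive_set0 nu_additive) mulr0 subr0 normr0 => gap.
    by have := mulr_ge0 (ltW delta_gt0) (mu_ge0 MA); rewrite leNgt gap.
  + by split; last exact: seq_disjoint_drop_empty.
- rewrite /= ltnS size_filter (leq_trans (count_size _ _)) //.
  by rewrite size_map size_enum_ord.
rewrite /energy big_cons -/(energy _) energy_drop_empty.
apply: le_trans (lerD (lexx _) (cell_energy_seq_cover_le Mrs drs)); rewrite cover_rs.
rewrite /average muA nuA in gap; rewrite /cell_energy muA nuA.
by apply: sqdivD_gap => //; rewrite ?mu_ge0 //; apply: nu_null.
Qed.

Lemma refine_partition X s : Sf_partition X s -> exists s', [/\ Sf_partition X s',
  (size s' <= k.+1 * size s)%N & energy s + delta ^+ 2 * unbalanced_mass s <= energy s'].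
Proof.
elim: s X => [|A s IH] X [/= Ss s0 ds <-].
  by exists [::]; split => //; rewrite /unbalanced_mass big_nil mulr0 addr0.
case: Ss s0 ds => [SA Ss] [A0 s0] [dA ds].
have [p [[Sp p0 dp cover_p] size_p energy_p]] := split_cell SA A0.
have [s' [[Ss' s'0 ds' cover_s'] size_s' energy_s']] := IH _ (And4 Ss s0 ds erefl).
exists (p ++ s'); split.
- split; rewrite ?every_cat ?seq_cover_cat ?cover_p ?cover_s' //.
  by apply: seq_disjoint_cat; rewrite ?cover_p ?cover_s'.
- by rewrite size_cat mulnS leq_add.
rewrite /energy /unbalanced_mass big_cat !big_cons -!/(energy _) -/(unbalanced_mass _).
apply: le_trans (lerD energy_p energy_s'); case: asboolP => _ /=.
  by rewrite addr0 addrA.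
by rewrite mulrDr addrACA addrA.
Qed.

Lemma energy_increment n : [set: T] !=set0 -> exists s, [/\ Sf_partition setT s,
  (size s <= k.+1 ^ n)%N & unbalanced_mass s <= delta \/ n%:R * delta ^+ 3 <= energy s].
Proof.
move=> T0; elim: n => [|n [s [Ps size_s inc_s]]].
  exists [:: setT]; split => //; last by right; rewrite mul0r energy_ge0.
  by case: Sf_semiring => *; split => //=; rewrite ?setI0 ?setU0.
have [small|large] := leP (unbalanced_mass s) delta.
  by exists s; split => //; [rewrite expnS (leq_trans size_s) ?leq_pmull | left].
have [s' [Ps' size_s' energy_s']] := refine_partition Ps.
exists s'; split => //; first by rewrite expnS (leq_trans size_s') ?leq_mul2l ?size_s ?orbT.
right; case: inc_s => [|inc_s]; first by rewrite leNgt large.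
apply: le_trans energy_s'; rewrite -nat1r mulrDl mul1r addrC lerD //.
by rewrite exprSr ler_wpM2l ?sqr_ge0 ?ltW.
Qed.

Lemma balanced_partition N : [set: T] !=set0 -> L ^+ 2 < N%:R * delta ^+ 3 ->
  exists s, [/\ Sf_partition setT s, (size s <= k.+1 ^ N)%N & unbalanced_mass s <= delta].
Proof.
move=> T0 large_N; have [s [Ps size_s [|inc_s]]] := energy_increment N T0.
  by exists s.
case: Ps => Ss _ ds cover_s; have := energy_le (sub_every Sf_M Ss) ds.
by rewrite cover_s muT mulr1 => /(le_trans inc_s); rewrite leNgt large_N.
Qed.

End EnergyIncrement.

Section Clip.
Variable R : realType.
Implicit Types (L x p : R).

Definition clip L x : R := Order.max (- L) (Order.min L x).

Lemma norm_clip_le L x : 0 <= L -> `|clip L x| <= L.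
Proof.
rewrite /clip => L0; have [xL|Lx] := lerP x L.
  have [Lx|xL'] := lerP (- L) x; first by rewrite ler_norml Lx xL.
  by rewrite normrN ger0_norm.
by have [_|] := lerP (- L) L; [rewrite ger0_norm | lra].
Qed.

Lemma clip_id L x : `|x| <= L -> clip L x = x.
Proof.
rewrite /clip ler_norml => /andP[Lx xL].
by have [_|] := lerP x L; have [_|] := lerP (- L) x; lra.
Qed.

Lemma norm_sub_clip_le L x : 0 <= L -> `|x - clip L x| <= `|x|.
Proof.
rewrite /clip => L0; have [xL|Lx] := lerP x L.
  have [_|xL'] := lerP (- L) x; first by rewrite subrr normr0.
  by rewrite !ler0_norm; lra.
by have [_|] := lerP (- L) L; [rewrite !ger0_norm; lra | lra].
Qed.

(* The tail vanishes where |x| <= L, and |x| <= |x|^p / L^(p-1) elsewhere. *)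
Lemma norm_sub_clip_powR L x p : 1 < p -> 0 < L ->
  `|x - clip L x| * L `^ (p - 1) <= `|x| `^ p.
Proof.
move=> p1 L_gt0; have [xL|Lx] := lerP `|x| L.
  by rewrite clip_id // subrr normr0 mul0r powR_ge0.
have p_gt0 : 0 < p by apply: lt_trans p1.
rewrite -[`|x| `^ p]mulr_powRB1 //; apply: ler_pM; rewrite ?powR_ge0 //.
  exact/norm_sub_clip_le/ltW.
by apply: ge0_ler_powR; rewrite ?nnegrE ?subr_ge0 //; apply: ltW.
Qed.

End Clip.
Lemma truncation_level (R : realType) (p eta : R) : 1 < p -> 0 < eta ->
  exists2 L, 0 < L & (L `^ (p - 1))^-1 <= eta ^+ 2 / 8.
Proof.
move=> p_gt1 eta_gt0; have K_gt0 : 0 < 8 / eta ^+ 2 by rewrite divr_gt0 ?exprn_gt0.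
have p1_neq0 : p - 1 != 0 by rewrite subr_eq0 gt_eqF.
exists ((8 / eta ^+ 2) `^ (p - 1)^-1); first by rewrite powR_gt0.
by rewrite -powRrM mulVf // powRr1 ?invf_div // ltW.
Qed.

Section TruncatedDecomposition.
Variables (d : measure_display) (Omega : measurableType d) (R : realType).
Variables (P : probability Omega R) (f : Omega -> R) (p L : R).
Hypotheses (p_gt1 : 1 < p) (L_gt0 : 0 < L) (mf : measurable_fun setT f).
Hypothesis f_normp_le1 : ('N[P]_(p%:E)[EFin \o f] <= 1)%E.

Definition mass (A : set Omega) := fine (P A).
Definition f_bdd x := clip L (f x).
Definition f_tail x := f x - f_bdd x.
Definition int_bdd A := \int[P]_(x in A) f_bdd x.
Definition int_abs_tail A := \int[P]_(x in A) `|f_tail x|.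
Let f_powR x := `|f x| `^ p.

Let p_gt0 : 0 < p. Proof. exact: lt_trans p_gt1. Qed.

Lemma setT_nonempty : [set: Omega] !=set0.
Proof.
apply/set0P/eqP => Omega0; have := probability_setT P.
by rewrite Omega0 measure0 => -[] /eqP; rewrite eq_sym oner_eq0.
Qed.

Lemma mass_ge0 A : 0 <= mass A.
Proof. exact: fine_ge0. Qed.

Lemma massT : mass setT = 1.
Proof. by rewrite /mass probability_setT. Qed.

Lemma mass_additive : disjoint_additive measurable mass.
Proof. by move=> A B mA mB AB; rewrite /mass measureU // fineD ?fin_num_measure. Qed.

Lemma sum_mass (Q : pred (set Omega)) s : every measurable s ->
  (\sum_(A <- s | Q A) P A = (\sum_(A <- s | Q A) mass A)%:E)%E.
Proof.
rewrite -sumEFin; elim: s => [|A s IH] /=; first by rewrite !big_nil.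
by move=> [mA ms]; rewrite !big_cons IH //; case: ifP; rewrite // fineK ?fin_num_measure.
Qed.

Lemma Rintegral_additive (g : Omega -> R) : P.-integrable setT (EFin \o g) ->
  disjoint_additive measurable (fun A => \int[P]_(x in A) g x).
Proof.
move=> ig A B mA mB AB; apply: Rintegral_setU => //; last exact/disj_set2P.
by apply: integrableS ig => //; apply: measurableU.
Qed.

Let measurable_f_powR : measurable_fun setT f_powR.
Proof. exact/(measurableT_comp (measurable_powR p))/measurableT_comp. Qed.

Let integral_f_powR_le1 : (\int[P]_x (f_powR x)%:E <= 1)%E.
Proof.
have -> : (\int[P]_x (f_powR x)%:E = 'N[P]_(p%:E)[EFin \o f] `^ p)%E.
  by rewrite poweR_Lnorm ?gt_eqF //; apply: eq_integral => x _; rewrite poweR_EFin.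
rewrite -(poweR1r p); apply: (gt0_ler_poweR (ltW p_gt0)) => //.
- by rewrite in_itv /= Lnorm_ge0 leey.
- by rewrite in_itv /= lee01 leey.
Qed.

Let integrable_f_powR : P.-integrable setT (EFin \o f_powR).
Proof.
apply/integrableP; split; first exact/measurable_EFinP/measurable_f_powR.
under eq_integral => x _ do rewrite /= ger0_norm ?powR_ge0 //.
exact: le_lt_trans integral_f_powR_le1 (ltry 1).
Qed.

Lemma measurable_f_bdd : measurable_fun setT f_bdd.
Proof. by apply: measurable_maxr => //; apply: measurable_minr. Qed.

Lemma norm_f_bdd_le x : `|f_bdd x| <= L.
Proof. exact/norm_clip_le/ltW. Qed.

Lemma norm_f_tail_le x : `|f_tail x| <= (L `^ (p - 1))^-1 * f_powR x.
Proof. by rewrite mulrC ler_pdivlMr ?powR_gt0 ?norm_sub_clip_powR. Qed.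

Lemma integrable_f_bdd : P.-integrable setT (EFin \o f_bdd).
Proof.
apply: le_integrable (finite_measure_integrable_cst P L measurableT) => //.
  exact/measurable_EFinP/measurable_f_bdd.
by move=> x _; rewrite /= lee_fin (ger0_norm (ltW L_gt0)) norm_f_bdd_le.
Qed.

Lemma integrable_f_tail : P.-integrable setT (EFin \o f_tail).
Proof.
apply: le_integrable (integrableZl measurableT (L `^ (p - 1))^-1 integrable_f_powR) => //.
  exact/measurable_EFinP/measurable_funB/measurable_f_bdd.
move=> x _; rewrite /= lee_fin [X in _ <= X]ger0_norm ?norm_f_tail_le //.
by rewrite mulr_ge0 ?invr_ge0 ?powR_ge0.
Qed.

Lemma integrable_norm_f_tail : P.-integrable setT (EFin \o (fun x => `|f_tail x|)).
Proof. by apply: eq_integrable (integrable_abse integrable_f_tail) => // x _. Qed.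

Lemma integrable_f : P.-integrable setT (EFin \o f).
Proof.
apply: eq_integrable (integrableD measurableT integrable_f_bdd integrable_f_tail) => //.
by move=> x _; rewrite /= -EFinD /f_tail addrC subrK.
Qed.

Lemma Rintegral_norm_f_tail_le : \int[P]_x `|f_tail x| <= (L `^ (p - 1))^-1.
Proof.
have int_tail := integrableZl measurableT (L `^ (p - 1))^-1 integrable_f_powR.
apply: le_trans (_ : \int[P]_x ((L `^ (p - 1))^-1 * f_powR x) <= _).
  apply: le_Rintegral => //; last by move=> x _; apply: norm_f_tail_le.
  exact: integrable_norm_f_tail.
rewrite RintegralZl // ler_piMr ?invr_ge0 ?powR_ge0 //.
have := integral_f_powR_le1; have : (0 <= \int[P]_x (f_powR x)%:E)%E.
  by apply: integral_ge0 => x _; rewrite lee_fin powR_ge0.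
by rewrite /Rintegral; case: (\int[P]_x (f_powR x)%:E)%E.
Qed.

Lemma int_abs_tail_ge0 A : 0 <= int_abs_tail A.
Proof. by apply: Rintegral_ge0 => x _. Qed.

Lemma int_split A : measurable A ->
  \int[P]_(x in A) f x = int_bdd A + \int[P]_(x in A) f_tail x.
Proof.
move=> mA; rewrite -RintegralD //; last 2 first.
- exact: integrableS integrable_f_bdd.
- exact: integrableS integrable_f_tail.
by apply: eq_Rintegral => x _; rewrite /f_tail addrC subrK.
Qed.

Lemma norm_int_bdd_le A : measurable A -> `|int_bdd A| <= L * mass A.
Proof.
move=> mA; have bdd_A := integrableS measurableT mA (subsetT _) integrable_f_bdd.
apply: le_trans (le_normr_Rintegral mA bdd_A) _; rewrite -Rintegral_cst //.
apply: le_Rintegral => //; last by move=> x _; apply: norm_f_bdd_le.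
  by apply: eq_integrable (integrable_abse bdd_A) => // x _.
exact: finite_measure_integrable_cst.
Qed.

Lemma norm_int_tail_le A : measurable A -> `|\int[P]_(x in A) f_tail x| <= int_abs_tail A.
Proof. by move=> mA; apply: le_normr_Rintegral => //; apply: integrableS integrable_f_tail. Qed.

Lemma uniform_of_balanced (Sf : set (set Omega)) eta A :
    Sf `<=` measurable -> Sf A -> balanced Sf mass int_bdd (eta / 2) A ->
    int_abs_tail A <= eta / 4 * mass A ->
  uniform_set P Sf f eta A.
Proof.
move=> Sf_meas SA bal small_tail; split => // B SB BA.
have [mA mB] := (Sf_meas _ SA, Sf_meas _ SB).
have tail_add := Rintegral_additive integrable_norm_f_tail.
have tail_BA : int_abs_tail B <= int_abs_tail A.
  by apply: (additive_le (@measurableD _ Omega) tail_add) => // X _; apply: int_abs_tail_ge0.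
have mass_BA : mass B <= mass A.
  by apply: (additive_le (@measurableD _ Omega) mass_additive) => // X _; apply: mass_ge0.
pose c := if 0 < mass A then \int[P]_(x in A) f_tail x / mass A else 0.
have cond_expE : cond_exp P f A = average mass int_bdd A + c.
  by rewrite /cond_exp /average /c -/(mass A) int_split //; case: ifP; rewrite ?mulrDl ?addr0.
have c_mass_le : `|c * mass B| <= int_abs_tail A.
  rewrite /c; case: ifP => [A_pos|_]; last by rewrite mul0r normr0 int_abs_tail_ge0.
  have inv_gt0 : 0 < (mass A)^-1 by rewrite invr_gt0.
  rewrite -mulrA normrM normrM (gtr0_norm inv_gt0) (ger0_norm (mass_ge0 _)) -[leRHS]mulr1.
  apply: ler_pM (norm_int_tail_le mA) _ => //; first by rewrite mulr_ge0 ?mass_ge0 ?ltW.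
  by rewrite mulrC ler_pdivrMr // mul1r.
rewrite RintegralB //; last 2 first.
- exact: integrableS integrable_f.
- exact: finite_measure_integrable_cst.
rewrite Rintegral_cst // -/(mass B) cond_expE mulrDl int_split //.
have := bal B SB BA; have := norm_int_tail_le mB.
set u := int_bdd B - _; set v := \int[P]_(x in B) _; set w := c * mass B.
have -> : int_bdd B + v - (average mass int_bdd A * mass B + w) = u + v - w.
  by rewrite /u; ring.
rewrite -/(mass A); have := ler_normB (u + v) w; have := ler_normD u v; lra.
Qed.

Lemma nonuniform_mass_le (Sf : set (set Omega)) eta A :
    0 < eta -> Sf `<=` measurable -> Sf A ->
  (if ~~ `[< uniform_set P Sf f eta A >] then mass A else 0) <=
  (if ~~ `[< balanced Sf mass int_bdd (eta / 2) A >] then mass A else 0)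
    + 4 / eta * int_abs_tail A.
Proof.
move=> eta_gt0 Sf_meas SA; have tail_ge0 := int_abs_tail_ge0 A.
have coef_gt0 : 0 < 4 / eta by rewrite divr_gt0.
have tail_term_ge0 := mulr_ge0 (ltW coef_gt0) tail_ge0.
case: asboolP => [_|nonunif] /=.
  by apply: addr_ge0 => //; case: ifP => _; rewrite ?mass_ge0.
case: asboolP => [bal|_] /=; last by rewrite lerDl.
have heavy_tail : eta / 4 * mass A < int_abs_tail A.
  by rewrite ltNge; apply/negP => light_tail; apply/nonunif/uniform_of_balanced.
have -> : mass A = 4 / eta * (eta / 4 * mass A) by field; rewrite gt_eqF.
by rewrite add0r ler_pM2l // ltW.
Qed.

Lemma uniform_mass_ge (Sf : set (set Omega)) eta s :
    0 < eta -> Sf `<=` measurable -> (L `^ (p - 1))^-1 <= eta ^+ 2 / 8 ->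
    Sf_partition Sf setT s -> unbalanced_mass Sf mass int_bdd (eta / 2) s <= eta / 2 ->
  1 - eta <= \sum_(A <- s | `[< uniform_set P Sf f eta A >]) mass A.
Proof.
move=> eta_gt0 Sf_meas tail_small [Ss _ ds cover_s] unbal_small.
have ms := sub_every Sf_meas Ss.
have additive_cover := additive_seq_cover (@measurable0 _ Omega) (@measurableU _ Omega).
have total : \sum_(A <- s) mass A = 1.
  by rewrite -additive_cover ?cover_s ?massT //; apply: mass_additive.
have tail_total : \sum_(A <- s) int_abs_tail A <= eta ^+ 2 / 8.
  rewrite -additive_cover // ?cover_s; last exact: Rintegral_additive integrable_norm_f_tail.
  exact: le_trans Rintegral_norm_f_tail_le tail_small.
have nonunif : \sum_(A <- s | ~~ `[< uniform_set P Sf f eta A >]) mass A <=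
    unbalanced_mass Sf mass int_bdd (eta / 2) s + 4 / eta * \sum_(A <- s) int_abs_tail A.
  rewrite big_mkcond /unbalanced_mass [X in X + _]big_mkcond mulr_sumr -big_split /=.
  by apply: ler_sum_every Ss _ => A SA; apply: nonuniform_mass_le.
have coef : 4 / eta * (eta ^+ 2 / 8) = eta / 2 by field; rewrite gt_eqF.
have tail_part : 4 / eta * \sum_(A <- s) int_abs_tail A <= eta / 2.
  by rewrite -coef ler_pM2l ?divr_gt0.
by move: total; rewrite (bigID (fun A => `[< uniform_set P Sf f eta A >])) /=; lra.
Qed.

End TruncatedDecomposition.

Lemma indexed_partition (T : Type) (Sf : set (set T)) s :
    [set: T] !=set0 -> Sf_partition Sf setT s ->
  [/\ (0 < size s)%N, is_partition (fun i : 'I_(size s) => nth set0 s i) &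
      forall i : 'I_(size s), Sf (nth set0 s i)].
Proof.
move=> [x _] [Ss s0 ds cover_s]; split.
- by case: s cover_s {Ss s0 ds} => //= /seteqP[_ /(_ x I)].
- split; [by move=> i; apply: every_nth s0 _ | by move=> i j ij; apply: seq_disjoint_nth |].
  apply/seteqP; split => // y _.
  have [i i_lt siy] : exists2 i, (i < size s)%N & nth set0 s i y.
    by apply: seq_coverP; rewrite cover_s.
  by exists (Ordinal i_lt).
- by move=> i; apply: every_nth Ss _.
Qed.

Unset Implicit Arguments.

Theorem proposition4p2 (R : realType) :
  forall (k : nat) (p eta : R),
    (0 < k)%N -> 1 < p <= 2 -> 0 < eta <= 1 ->
    exists U : nat, (0 < U)%N /\
      forall (d : measure_display) (Omega : measurableType d)
             (P : probability Omega R) (Sf : set (set Omega)) (f : Omega -> R),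
        k_semiring k Sf -> Sf `<=` measurable ->
        measurable_fun setT f ->
        ('N[P]_(p%:E)[EFin \o f] <= 1)%E ->
        exists M : nat, exists Pt : 'I_M -> set Omega,
          [/\ (0 < M <= U)%N,
              is_partition Pt,
              (forall i, Sf (Pt i)) &
              ((1 - eta)%:E <=
                 \sum_(i < M | `[< uniform_set P Sf f eta (Pt i) >]) P (Pt i))%E].
Proof.
move=> k p eta _ /andP[p_gt1 _] /andP[eta_gt0 _].
have [L L_gt0 tail_small] := truncation_level p_gt1 eta_gt0.
have half_eta_gt0 : 0 < eta / 2 by rewrite divr_gt0.
pose N := (Num.truncn (L ^+ 2 / (eta / 2) ^+ 3)).+1.
have large_N : L ^+ 2 < N%:R * (eta / 2) ^+ 3.
  by rewrite -ltr_pdivrMr ?exprn_gt0 // truncnS_gt.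
exists (k.+1 ^ N)%N; split; first by rewrite expn_gt0.
move=> d Omega P Sf f Sf_semiring Sf_meas mf f_normp.
have Omega0 := setT_nonempty P.
have [s [Ps size_s unbal]] := balanced_partition (nu := int_bdd P f L) measurable0
  (@measurableU _ Omega) (@measurableD _ Omega) Sf_semiring Sf_meas (mass_additive P)
  (Rintegral_additive (integrable_f_bdd P L_gt0 mf)) (fun A _ => mass_ge0 P A)
  (massT P) (norm_int_bdd_le P L_gt0 mf) half_eta_gt0 Omega0 large_N.
have [s_gt0 partition_s Sf_s] := indexed_partition Omega0 Ps.
exists (size s), (nth set0 s); split; rewrite ?s_gt0 //.
have -> : (\sum_(i < size s | `[< uniform_set P Sf f eta (nth set0 s i) >]) P (nth set0 s i) =
    \sum_(A <- s | `[< uniform_set P Sf f eta A >]) P A)%E.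
  by rewrite (big_nth set0) big_mkord.
rewrite sum_mass ?lee_fin; last by case: Ps => Ss *; apply: sub_every Ss.
exact: (uniform_mass_ge p_gt1 L_gt0 mf f_normp eta_gt0 Sf_meas tail_small Ps unbal).
Qed.
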